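(* Let $E=\{(x,y)\in\mathbb{R}^2: (x/a)^2+(y/b)^2<1\}$ with $0<b\le a$. Then \[ \frac12\left(\frac ab+\frac ba\right)\le P(E)\le\frac{1}{\sin\frac{b\pi}{2a}}\le\frac{2}{\pi}\left(\frac ab+\frac ba\right). \]
   Context: For four distinct points $a_1,a_2,a_3,a_4\in\mathbb{R}^2$ set $p(a_1,a_2,a_3,a_4)=\frac{|a_1-a_2||a_3-a_4|+|a_1-a_4||a_2-a_3|}{|a_1-a_3||a_2-a_4|}$. For a domain $D$ whose boundary is a Jordan curve, $P(D)=\sup p(a_1,a_2,a_3,a_4)$ over all distinct $a_1,a_2,a_3,a_4\in\partial D$ occurring in this order when $\partial D$ is traversed in the positive direction. *)

From Stdlib Require Import Reals Lra.
Open Scope R_scope.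

Definition pt := (R * R)%type.

Definition dist2 (u v : pt) : R :=
  sqrt ((fst u - fst v) ^ 2 + (snd u - snd v) ^ 2).

Definition pfun (a1 a2 a3 a4 : pt) : R :=
  (dist2 a1 a2 * dist2 a3 a4 + dist2 a1 a4 * dist2 a2 a3)
  / (dist2 a1 a3 * dist2 a2 a4).

Definition ellipse_dom (a b : R) (z : pt) : Prop :=
  (fst z / a) ^ 2 + (snd z / b) ^ 2 < 1.

Definition ell (a b t : R) : pt := (a * cos t, b * sin t).

(* Four distinct boundary points occurring in this order along the positively
   oriented boundary: a_i = ell t_i with t1 < t2 < t3 < t4 < t1 + 2 PI. *)
Definition ordered_quad (a b : R) (a1 a2 a3 a4 : pt) : Prop :=
  exists t1 t2 t3 t4 : R,
    t1 < t2 /\ t2 < t3 /\ t3 < t4 /\ t4 < t1 + 2 * PI /\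
    a1 = ell a b t1 /\ a2 = ell a b t2 /\ a3 = ell a b t3 /\ a4 = ell a b t4.

(* The set of values whose supremum is P(E). *)
Definition P_values (a b : R) (v : R) : Prop :=
  exists a1 a2 a3 a4 : pt, ordered_quad a b a1 a2 a3 a4 /\ v = pfun a1 a2 a3 a4.

(* The chord of the ellipse between the parameters m - h and m + h has length
   2 |sin h| N(m) with N(m) = sqrt (a^2 sin^2 m + b^2 cos^2 m) ([ell_speed]),
   and N(x) N(y) depends only on x + y and cos (x - y).  For a quadruple with
   half-gaps al, be, ga the three chord products in p share x + y = tau, so p is
   a ratio of sine-weighted values of
   Q(th) = sqrt ((s cos tau - f cos th)^2 + k^2 sin^2 tau) ([chord_form]),
   where s = (a^2+b^2)/2, f = (a^2-b^2)/2, k = ab.  Ptolemy's identity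
   sin al sin ga + sin be sin (al+be+ga) = sin (al+be) sin (be+ga) and its
   cosine-weighted companion make the affine majorants s - f cos th cos tau of Q
   ([chord_affine]) add up exactly, and k (s - f cos th cos tau) <= s Q(th);
   hence p <= s/k, with equality for the rhombus spanned by the ends of the
   axes.  So P(E) = (a/b + b/a)/2, and the remaining inequalities are
   one-variable estimates in x = b/a obtained from Taylor bounds for sin and cos. *)
From Stdlib Require Import Reals Lra Psatz Nsatz.
Open Scope R_scope.

Definition ell_speed (a b m : R) : R := sqrt (a ^ 2 * sin m ^ 2 + b ^ 2 * cos m ^ 2).

Definition chord_form (a b tau th : R) : R :=
  sqrt (((a ^ 2 + b ^ 2) / 2 * cos tau - (a ^ 2 - b ^ 2) / 2 * cos th) ^ 2
        + (a * b) ^ 2 * sin tau ^ 2).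

Lemma dist2_ell (a b u v h m : R) : v - u = 2 * h -> u + v = 2 * m ->
  dist2 (ell a b u) (ell a b v) = 2 * Rabs (sin h) * ell_speed a b m.
Proof.
  intros Hh Hm.
  replace u with (m - h) by lra; replace v with (m + h) by lra.
  unfold dist2, ell, ell_speed; simpl fst; simpl snd.
  rewrite cos_minus, cos_plus, sin_minus, sin_plus.
  transitivity (sqrt ((2 * sin h) ^ 2) * sqrt (a ^ 2 * sin m ^ 2 + b ^ 2 * cos m ^ 2)).
  - rewrite <- sqrt_mult by nra. f_equal. ring.
  - rewrite <- Rsqr_pow2, sqrt_Rsqr_abs, Rabs_mult, (Rabs_right 2) by lra. ring.
Qed.

Lemma ell_speed_mul (a b x y : R) :
  ell_speed a b x * ell_speed a b y = chord_form a b (x + y) (y - x).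
Proof.
  unfold ell_speed, chord_form. rewrite <- sqrt_mult by nra. f_equal.
  rewrite cos_plus, cos_minus, sin_plus. field.
Qed.

Lemma dist2_ell_mul (a b u1 v1 u2 v2 h1 h2 tau th : R) :
  v1 - u1 = 2 * h1 -> v2 - u2 = 2 * h2 ->
  u1 + v1 + u2 + v2 = 2 * tau -> u2 + v2 - u1 - v1 = 2 * th ->
  dist2 (ell a b u1) (ell a b v1) * dist2 (ell a b u2) (ell a b v2)
  = 4 * Rabs (sin h1) * Rabs (sin h2) * chord_form a b tau th.
Proof.
  intros H1 H2 Htau Hth.
  rewrite (dist2_ell a b u1 v1 h1 ((u1 + v1) / 2)), (dist2_ell a b u2 v2 h2 ((u2 + v2) / 2))
    by lra.
  replace tau with ((u1 + v1) / 2 + (u2 + v2) / 2) by lra.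
  replace th with ((u2 + v2) / 2 - (u1 + v1) / 2) by lra.
  rewrite <- ell_speed_mul. ring.
Qed.

Lemma sin_ptolemy (al be ga : R) :
  sin al * sin ga + sin be * sin (al + be + ga) = sin (al + be) * sin (be + ga).
Proof.
  repeat rewrite ?sin_plus, ?cos_plus.
  pose proof (sin2_cos2 al); pose proof (sin2_cos2 be); pose proof (sin2_cos2 ga).
  unfold Rsqr in *. nsatz.
Qed.

Lemma sin_ptolemy_cos (al be ga : R) :
  sin al * sin ga * cos (al + 2 * be + ga) + sin be * sin (al + be + ga) * cos (al - ga)
  = sin (al + be) * sin (be + ga) * cos (al + ga).
Proof.
  replace (al + 2 * be + ga) with (al + be + be + ga) by ring.
  rewrite cos_minus; repeat rewrite ?sin_plus, ?cos_plus.
  pose proof (sin2_cos2 al); pose proof (sin2_cos2 be); pose proof (sin2_cos2 ga).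
  unfold Rsqr in *. nsatz.
Qed.

Section AffineBounds.

Variables s f k C S c : R.
Hypothesis HCS : C ^ 2 + S ^ 2 = 1.
Hypothesis Hc : -1 <= c <= 1.
Hypothesis Hf : 0 <= f.
Hypothesis Hsfk : s ^ 2 = f ^ 2 + k ^ 2.
Hypothesis Hs : 0 <= s.

Let affine_ge0 : 0 <= s - f * c * C.
Proof.
  assert (f <= s) by nra. assert (-1 <= C <= 1) by nra. assert (-1 <= c * C <= 1) by nra. nra.
Qed.

Lemma sqrt_form_le_affine : sqrt ((s * C - f * c) ^ 2 + k ^ 2 * S ^ 2) <= s - f * c * C.
Proof.
  pose proof affine_ge0.
  rewrite <- (sqrt_pow2 (s - f * c * C)) by lra.
  apply sqrt_le_1_alt.
  assert (E : (s - f * c * C) ^ 2 - ((s * C - f * c) ^ 2 + k ^ 2 * S ^ 2)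
              = f ^ 2 * (1 - c ^ 2) * (1 - C ^ 2)).
  { replace (S ^ 2) with (1 - C ^ 2) by lra. replace (k ^ 2) with (s ^ 2 - f ^ 2) by lra. ring. }
  assert (0 <= f ^ 2 * (1 - c ^ 2) * (1 - C ^ 2))
    by (apply Rmult_le_pos; [apply Rmult_le_pos|]; nra).
  lra.
Qed.

Lemma affine_le_sqrt_form : 0 <= k ->
  k * (s - f * c * C) <= s * sqrt ((s * C - f * c) ^ 2 + k ^ 2 * S ^ 2).
Proof.
  intros Hk. pose proof affine_ge0.
  rewrite <- (sqrt_pow2 (k * (s - f * c * C))) by nra.
  assert (0 <= (s * C - f * c) ^ 2 + k ^ 2 * S ^ 2)
    by (apply Rplus_le_le_0_compat; [|apply Rmult_le_pos]; apply pow2_ge_0).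
  rewrite <- (sqrt_pow2 s) at 2 by lra.
  rewrite <- sqrt_mult by (try apply pow2_ge_0; assumption).
  apply sqrt_le_1_alt.
  assert (E : s ^ 2 * ((s * C - f * c) ^ 2 + k ^ 2 * S ^ 2) - (k * (s - f * c * C)) ^ 2
              = (s ^ 2 - k ^ 2) * (s * C - f * c) ^ 2 + k ^ 2 * (f * c) ^ 2 * (1 - C ^ 2)).
  { replace (S ^ 2) with (1 - C ^ 2) by lra. ring. }
  assert (0 <= k ^ 2 * (f * c) ^ 2 * (1 - C ^ 2))
    by (apply Rmult_le_pos; [apply Rmult_le_pos; apply pow2_ge_0 | nra]).
  assert (0 <= (s ^ 2 - k ^ 2) * (s * C - f * c) ^ 2)
    by (apply Rmult_le_pos; [nra | apply pow2_ge_0]).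
  lra.
Qed.

End AffineBounds.

Definition chord_affine (a b tau th : R) : R :=
  (a ^ 2 + b ^ 2) / 2 - (a ^ 2 - b ^ 2) / 2 * cos th * cos tau.

Lemma chord_form_le_affine (a b tau th : R) : 0 <= b <= a ->
  chord_form a b tau th <= chord_affine a b tau th.
Proof.
  intros Hba. apply sqrt_form_le_affine; try nra.
  - pose proof (sin2_cos2 tau). unfold Rsqr in *. lra.
  - apply COS_bound.
Qed.

Lemma chord_affine_le_form (a b tau th : R) : 0 <= b <= a ->
  a * b * chord_affine a b tau th <= (a ^ 2 + b ^ 2) / 2 * chord_form a b tau th.
Proof.
  intros Hba. apply affine_le_sqrt_form; try nra.
  - pose proof (sin2_cos2 tau). unfold Rsqr in *. lra.
  - apply COS_bound.
Qed.

Lemma chord_affine_gt0 (a b tau th : R) : 0 < b <= a -> 0 < chord_affine a b tau th.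
Proof.
  intros Hba. pose proof (COS_bound th); pose proof (COS_bound tau).
  assert (0 <= (a ^ 2 - b ^ 2) / 2 * (1 - cos th * cos tau)) by (apply Rmult_le_pos; nra).
  replace (chord_affine a b tau th) with (b ^ 2 + (a ^ 2 - b ^ 2) / 2 * (1 - cos th * cos tau))
    by (unfold chord_affine; field).
  nra.
Qed.

Lemma chord_affine_ptolemy (a b tau al be ga : R) :
  sin al * sin ga * chord_affine a b tau (al + 2 * be + ga)
  + sin be * sin (al + be + ga) * chord_affine a b tau (al - ga)
  = sin (al + be) * sin (be + ga) * chord_affine a b tau (al + ga).
Proof.
  unfold chord_affine.
  transitivity ((sin al * sin ga + sin be * sin (al + be + ga)) * ((a ^ 2 + b ^ 2) / 2)
    - (a ^ 2 - b ^ 2) / 2 * cos tau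
      * (sin al * sin ga * cos (al + 2 * be + ga)
         + sin be * sin (al + be + ga) * cos (al - ga))); [ring|].
  rewrite sin_ptolemy, sin_ptolemy_cos. ring.
Qed.

Lemma Rdiv_le_Rdiv_cross (x d y e : R) : 0 < d -> 0 < e -> x * e <= y * d -> x / d <= y / e.
Proof.
  intros Hd He H.
  replace (x / d) with (x * e * / (d * e)) by (field; lra).
  replace (y / e) with (y * d * / (d * e)) by (field; lra).
  apply Rmult_le_compat_r; [left; apply Rinv_0_lt_compat; nra | assumption].
Qed.

Lemma ratio_le_of_affine_bounds (lam mu nu Q1 Q2 Q3 L1 L2 L3 s k : R) :
  0 < lam -> 0 < mu -> 0 < nu -> 0 < k -> 0 < Q3 ->
  Q1 <= L1 -> Q2 <= L2 -> lam * L1 + mu * L2 = nu * L3 -> k * L3 <= s * Q3 ->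
  (lam * Q1 + mu * Q2) / (nu * Q3) <= s / k.
Proof.
  intros Hlam Hmu Hnu Hk HQ3 H1 H2 Hsum H3.
  apply Rdiv_le_Rdiv_cross; [nra | lra |].
  assert (lam * Q1 + mu * Q2 <= nu * L3) by nra.
  nra.
Qed.

Lemma pfun_ell_le (a b t1 t2 t3 t4 : R) : 0 < b -> b <= a ->
  t1 < t2 -> t2 < t3 -> t3 < t4 -> t4 < t1 + 2 * PI ->
  pfun (ell a b t1) (ell a b t2) (ell a b t3) (ell a b t4) <= (a ^ 2 + b ^ 2) / 2 / (a * b).
Proof.
  intros Hb Hba H12 H23 H34 H41.
  set (al := (t2 - t1) / 2); set (be := (t3 - t2) / 2); set (ga := (t4 - t3) / 2).
  set (tau := (t1 + t2 + t3 + t4) / 2).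
  assert (Hsin : forall x, 0 < x < PI -> 0 < sin x) by (intros; apply sin_gt_0; lra).
  unfold pfun.
  rewrite (dist2_ell_mul a b t1 t2 t3 t4 al ga tau (al + 2 * be + ga)) by (unfold al, be, ga, tau; lra).
  rewrite (dist2_ell_mul a b t1 t4 t2 t3 (al + be + ga) be tau (al - ga))
    by (unfold al, be, ga, tau; lra).
  rewrite (dist2_ell_mul a b t1 t3 t2 t4 (al + be) (be + ga) tau (al + ga))
    by (unfold al, be, ga, tau; lra).
  rewrite !Rabs_right by (apply Rle_ge, Rlt_le, Hsin; unfold al, be, ga; lra).
  set (F := chord_form a b tau); set (L := chord_affine a b tau).
  assert (Hk : 0 < a * b) by nra.
  assert (HF : a * b * L (al + ga) <= (a ^ 2 + b ^ 2) / 2 * F (al + ga))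
    by (apply chord_affine_le_form; lra).
  assert (HL : 0 < L (al + ga)) by (apply chord_affine_gt0; lra).
  assert (HF3 : 0 < F (al + ga)) by nra.
  assert (Hsin' : forall x, 0 < x < PI -> sin x <> 0) by (intros; apply Rgt_not_eq, Hsin; lra).
  replace (_ / _) with ((sin al * sin ga * F (al + 2 * be + ga)
                         + sin be * sin (al + be + ga) * F (al - ga))
                        / (sin (al + be) * sin (be + ga) * F (al + ga)))
    by (field; repeat split; try lra; apply Hsin'; unfold al, be, ga; lra).
  apply (ratio_le_of_affine_bounds _ _ _ _ _ _ (L (al + 2 * be + ga)) (L (al - ga)) (L (al + ga)));
    [ apply Rmult_lt_0_compat; apply Hsin; unfold al, be, ga; lra .. | exact Hk | exact HF3
    | apply chord_form_le_affine; lra | apply chord_form_le_affine; lra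
    | apply chord_affine_ptolemy | exact HF ].
Qed.

Lemma P_values_le (a b v : R) : 0 < b -> b <= a -> P_values a b v ->
  v <= (a ^ 2 + b ^ 2) / 2 / (a * b).
Proof.
  intros Hb Hba (a1 & a2 & a3 & a4 & (t1 & t2 & t3 & t4 & ? & ? & ? & ? & -> & -> & -> & ->) & ->).
  now apply pfun_ell_le.
Qed.

Lemma P_values_axes (a b : R) : 0 < b -> b <= a -> P_values a b ((a ^ 2 + b ^ 2) / 2 / (a * b)).
Proof.
  intros Hb Hba.
  exists (ell a b 0), (ell a b (PI / 2)), (ell a b PI), (ell a b (3 * (PI / 2))).
  split.
  - exists 0, (PI / 2), PI, (3 * (PI / 2)). pose proof PI_RGT_0.
    repeat split; lra.
  - unfold pfun, dist2, ell; simpl fst; simpl snd.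
    rewrite cos_0, sin_0, cos_PI2, sin_PI2, cos_PI, sin_PI, cos_3PI2, sin_3PI2.
    replace ((a * 1 - a * -1) ^ 2 + (b * 0 - b * 0) ^ 2) with ((2 * a) ^ 2) by ring.
    replace ((a * 0 - a * 0) ^ 2 + (b * 1 - b * -1) ^ 2) with ((2 * b) ^ 2) by ring.
    rewrite !sqrt_pow2 by lra.
    replace ((a * 1 - a * 0) ^ 2 + (b * 0 - b * 1) ^ 2) with (a ^ 2 + b ^ 2) by ring.
    replace ((a * -1 - a * 0) ^ 2 + (b * 0 - b * -1) ^ 2) with (a ^ 2 + b ^ 2) by ring.
    replace ((a * 1 - a * 0) ^ 2 + (b * 0 - b * -1) ^ 2) with (a ^ 2 + b ^ 2) by ring.
    replace ((a * 0 - a * -1) ^ 2 + (b * 1 - b * 0) ^ 2) with (a ^ 2 + b ^ 2) by ring.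
    rewrite !sqrt_sqrt by nra.
    field. lra.
Qed.

Lemma PI_bounds : 288 / 100 < PI < 334 / 100.
Proof.
  destruct (PI_ineq 1) as [Hlo _]; destruct (PI_ineq 2) as [_ Hhi].
  unfold tg_alt, PI_tg in Hlo, Hhi; simpl in Hlo, Hhi. lra.
Qed.

Definition cos_taylor4 (y : R) : R := 1 - y ^ 2 / 2 + y ^ 4 / 24.

Lemma cos_le_cos_taylor4 (y : R) : 0 <= y <= PI / 2 -> cos y <= cos_taylor4 y.
Proof.
  intros Hy. destruct (cos_bound y 0) as [_ H]; try lra.
  unfold cos_approx, cos_term in H; simpl in H. unfold cos_taylor4. lra.
Qed.

Lemma sin_taylor3_le_sin (y : R) : 0 <= y <= PI -> y - y ^ 3 / 6 <= sin y.
Proof.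
  intros Hy. destruct (sin_bound y 0) as [H _]; try lra.
  unfold sin_approx, sin_term in H; simpl in H. lra.
Qed.

Lemma cos_taylor4_antitone (z y : R) : 0 <= z <= y -> y <= 2 -> cos_taylor4 y <= cos_taylor4 z.
Proof.
  intros [Hz Hzy] Hy. unfold cos_taylor4.
  assert (E : (1 - z ^ 2 / 2 + z ^ 4 / 24) - (1 - y ^ 2 / 2 + y ^ 4 / 24)
              = (y ^ 2 - z ^ 2) * (1 / 2 - (y ^ 2 + z ^ 2) / 24)) by field.
  assert (0 <= (y ^ 2 - z ^ 2) * (1 / 2 - (y ^ 2 + z ^ 2) / 24)) by (apply Rmult_le_pos; nra).
  lra.
Qed.

(* 144/100 is a rational lower bound for PI/2, so via [cos_taylor4_antitone] this
   bounds cos (PI e / 2). *)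
Lemma cos_taylor4_scaled_le (e : R) : 0 <= e <= 6 / 10 ->
  cos_taylor4 (144 / 100 * e) * (1 + (1 - e) ^ 2) <= 2 * (1 - e).
Proof.
  intros [H0 H1]. unfold cos_taylor4. set (c := 144 / 100).
  assert (B : 0 <= -1 + c ^ 2 * (1 - e + e ^ 2 / 2) - (c ^ 4 * e ^ 2 / 24) * (2 - 2 * e + e ^ 2)).
  { assert (0 <= e ^ 2 <= 36 / 100) by nra.
    assert (0 <= 2 - 2 * e + e ^ 2 <= 2) by nra.
    assert (e ^ 2 * (2 - 2 * e + e ^ 2) <= 72 / 100) by nra.
    unfold c. nra. }
  assert (E : 2 * (1 - e) - (1 - (c * e) ^ 2 / 2 + (c * e) ^ 4 / 24) * (1 + (1 - e) ^ 2)
              = e ^ 2 * (-1 + c ^ 2 * (1 - e + e ^ 2 / 2)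
                         - (c ^ 4 * e ^ 2 / 24) * (2 - 2 * e + e ^ 2))) by (unfold c; field).
  assert (0 <= e ^ 2 * (-1 + c ^ 2 * (1 - e + e ^ 2 / 2)
                        - (c ^ 4 * e ^ 2 / 24) * (2 - 2 * e + e ^ 2)))
    by (apply Rmult_le_pos; [nra | lra]).
  lra.
Qed.

Lemma sin_half_pi_mul_le (x : R) : 0 < x <= 1 -> sin (PI / 2 * x) * (1 + x ^ 2) <= 2 * x.
Proof.
  intros Hx. pose proof PI_bounds.
  destruct (Rle_lt_dec x (2 / 5)) as [Hsmall | Hlarge].
  - assert (sin (PI / 2 * x) < PI / 2 * x) by (apply sin_lt_x; nra).
    assert (PI * (1 + x ^ 2) <= 4) by nra.
    nra.
  - set (e := 1 - x).
    assert (He : 0 <= e <= 6 / 10) by (unfold e; lra).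
    replace (sin (PI / 2 * x)) with (cos (PI / 2 * e))
      by (rewrite <- cos_shift; f_equal; unfold e; ring).
    replace x with (1 - e) by (unfold e; ring).
    assert (cos (PI / 2 * e) <= cos_taylor4 (144 / 100 * e)).
    { apply (Rle_trans _ (cos_taylor4 (PI / 2 * e))).
      - apply cos_le_cos_taylor4; nra.
      - apply cos_taylor4_antitone; nra. }
    pose proof (cos_taylor4_scaled_le e He).
    assert (0 < 1 + (1 - e) ^ 2) by nra.
    nra.
Qed.

Lemma pi_mul_le_sin_half_pi_mul (x : R) : 0 < x <= 1 ->
  PI * x <= 2 * (1 + x ^ 2) * sin (PI / 2 * x).
Proof.
  intros Hx. pose proof PI_bounds.
  set (u := PI / 2 * x).
  assert (Hu : 0 < u <= PI / 2) by (unfold u; nra).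
  assert (u - u ^ 3 / 6 <= sin u) by (apply sin_taylor3_le_sin; lra).
  assert (Hfactor : 1 <= (1 + x ^ 2) * (1 - PI ^ 2 * x ^ 2 / 24)).
  { assert (E : (1 + x ^ 2) * (1 - PI ^ 2 * x ^ 2 / 24) - 1
                = x ^ 2 * (1 - PI ^ 2 / 24 - PI ^ 2 * x ^ 2 / 24)) by field.
    assert (PI ^ 2 <= 12) by nra.
    assert (x ^ 2 <= 1) by nra.
    assert (0 <= x ^ 2 * (1 - PI ^ 2 / 24 - PI ^ 2 * x ^ 2 / 24)) by (apply Rmult_le_pos; nra).
    lra. }
  assert (E : u - u ^ 3 / 6 = u * (1 - PI ^ 2 * x ^ 2 / 24)) by (unfold u; field).
  assert (u <= (1 + x ^ 2) * (u - u ^ 3 / 6)) by (rewrite E; nra).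
  assert ((1 + x ^ 2) * (u - u ^ 3 / 6) <= (1 + x ^ 2) * sin u)
    by (apply Rmult_le_compat_l; nra).
  unfold u in *. nra.
Qed.

Theorem theorem1p6 (a b : R) (hb : 0 < b) (hba : b <= a) :
  exists P : R,
    is_lub (P_values a b) P /\
    (1 / 2) * (a / b + b / a) <= P /\
    P <= 1 / sin (b * PI / (2 * a)) /\
    1 / sin (b * PI / (2 * a)) <= (2 / PI) * (a / b + b / a).
Proof.
  exists ((a ^ 2 + b ^ 2) / 2 / (a * b)).
  assert (EP : (a ^ 2 + b ^ 2) / 2 / (a * b) = (1 + (b / a) ^ 2) / (2 * (b / a))) by (field; lra).
  assert (EA : b * PI / (2 * a) = PI / 2 * (b / a)) by (field; lra).
  assert (Hx : 0 < b / a <= 1).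
  { split; [apply Rdiv_lt_0_compat; lra|].
    apply (Rmult_le_reg_r a); [lra|]. field_simplify; lra. }
  set (x := b / a) in *.
  pose proof PI_RGT_0.
  assert (0 < sin (PI / 2 * x)) by (apply sin_gt_0; nra).
  split; [|split; [|split]].
  - split.
    + intros v Hv. now apply (P_values_le a b).
    + intros M HM. now apply HM, P_values_axes.
  - right. unfold x. field. lra.
  - rewrite EP, EA. apply Rdiv_le_Rdiv_cross; [lra | lra |].
    pose proof (sin_half_pi_mul_le x Hx). lra.
  - rewrite EA. replace (2 / PI * (a / b + x)) with (2 * (1 + x ^ 2) / (PI * x))
      by (unfold x; field; split; lra).
    apply Rdiv_le_Rdiv_cross; [lra | nra |].
    pose proof (pi_mul_le_sin_half_pi_mul x Hx). lra.
Qed.
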